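(* Every countable directed subset of an $\omega$-cpo has a supremum.
   Context: We work constructively, in higher-order intuitionistic logic with Dependent Choice (in particular Countable Choice). A chain in a poset $(P,\le)$ is a sequence $c:\mathbb{N}\to P$ with $c_i\le c_{i+1}$ for all $i$. An $\omega$-cpo is a poset in which every chain has a supremum. A subset $S\subseteq P$ is directed if it is inhabited and any two elements of $S$ have an upper bound in $S$. A set $S$ is countable if there is a surjection $\mathbb{N}\to1+S$. *)

Definition is_poset {T : Type} (le : T -> T -> Prop) : Prop :=
  (forall x, le x x) /\
  (forall x y z, le x y -> le y z -> le x z) /\
  (forall x y, le x y -> le y x -> x = y).

Definition is_sup {T : Type} (le : T -> T -> Prop) (S : T -> Prop) (s : T) : Prop :=
  (forall x, S x -> le x s) /\
  (forall u, (forall x, S x -> le x u) -> le s u).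

Definition is_chain {T : Type} (le : T -> T -> Prop) (c : nat -> T) : Prop :=
  forall i, le (c i) (c (S i)).

Definition omega_cpo {T : Type} (le : T -> T -> Prop) : Prop :=
  is_poset le /\
  forall c : nat -> T, is_chain le c -> exists s, is_sup le (fun x => exists i, c i = x) s.

Definition directed {T : Type} (le : T -> T -> Prop) (S : T -> Prop) : Prop :=
  (exists x, S x) /\
  (forall x y, S x -> S y -> exists z, S z /\ le x z /\ le y z).

(* countable: there is a surjection nat -> 1 + S  (1 + S rendered as option) *)
Definition countable {T : Type} (S : T -> Prop) : Prop :=
  exists f : nat -> option {x : T | S x},
    forall y : option {x : T | S x}, exists n, f n = y.

(* Enumerate D by a sequence e (possible since D is inhabited and countable).
   Directedness and dependent choice give a chain c inside D with e n <= c n;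
   this chain is cofinal in D, so its supremum in the omega-cpo is also the
   supremum of D. *)

From Stdlib Require Import ClassicalEpsilon.

Lemma dependent_choice_nat {A : Type} (P : nat -> A -> Prop) (R : A -> A -> Prop)
    (x0 : A) :
  P 0 x0 ->
  (forall n x, P n x -> exists y, P (S n) y /\ R x y) ->
  exists f : nat -> A, (forall n, P n (f n)) /\ (forall n, R (f n) (f (S n))).
Proof.
  intros H0 Hstep.
  pose (next n (x : {x | P n x}) :=
          constructive_indefinite_description _ (Hstep n _ (proj2_sig x))).
  pose (f := fix f n : {x | P n x} :=
          match n with
          | O => exist _ x0 H0
          | S m => exist _ _ (proj1 (proj2_sig (next m (f m))))
          end).
  exists (fun n => proj1_sig (f n)).
  split.
  - intro n. exact (proj2_sig (f n)).
  - intro n. exact (proj2 (proj2_sig (next n (f n)))).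
Qed.

Lemma countable_enum {T : Type} (D : T -> Prop) :
  countable D -> (exists x, D x) ->
  exists e : nat -> T, (forall n, D (e n)) /\ (forall x, D x -> exists n, e n = x).
Proof.
  intros [f Hf] [d0 Hd0].
  exists (fun n => match f n with Some x => proj1_sig x | None => d0 end).
  split.
  - intro n. destruct (f n) as [[x Hx] |]; assumption.
  - intros x Hx. destruct (Hf (Some (exist D x Hx))) as [n Hn].
    exists n. rewrite Hn. reflexivity.
Qed.

Lemma directed_dominating_chain {T : Type} (le : T -> T -> Prop) (D : T -> Prop)
    (e : nat -> T) :
  directed le D -> (forall n, D (e n)) ->
  exists c : nat -> T,
    is_chain le c /\ (forall n, D (c n)) /\ (forall n, le (e n) (c n)).
Proof.
  intros [_ Hub] HeD.
  assert (Hstep : forall n x, D x /\ le (e n) x ->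
                  exists y, (D y /\ le (e (S n)) y) /\ le x y).
  { intros n x [Hx _].
    destruct (Hub x (e (S n)) Hx (HeD (S n))) as [y [Hy [Hxy Hey]]].
    exists y. auto. }
  (* start above e 0 rather than at e 0, which would need reflexivity *)
  destruct (Hub (e 0) (e 0) (HeD 0) (HeD 0)) as [c0 [Hc0 [He0 _]]].
  destruct (dependent_choice_nat (fun n x => D x /\ le (e n) x) le c0
              (conj Hc0 He0) Hstep) as [c [Hc Hchain]].
  exists c. split; [exact Hchain | split; intro n; apply Hc].
Qed.

Lemma is_sup_cofinal {T : Type} (le : T -> T -> Prop) (C D : T -> Prop) (s : T) :
  (forall x y z, le x y -> le y z -> le x z) ->
  (forall x, C x -> D x) -> (forall x, D x -> exists y, C y /\ le x y) ->
  is_sup le C s -> is_sup le D s.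
Proof.
  intros Htrans HCD Hcof [Hsup Hleast]. split.
  - intros x Hx. destruct (Hcof x Hx) as [y [Hy Hxy]].
    exact (Htrans _ _ _ Hxy (Hsup y Hy)).
  - intros u Hu. apply Hleast. intros x Hx. exact (Hu x (HCD x Hx)).
Qed.

Theorem lemma3p9 (T : Type) (le : T -> T -> Prop) (Hcpo : omega_cpo le)
  (D : T -> Prop) (Hcount : countable D) (Hdir : directed le D) :
  exists s : T, is_sup le D s.
Proof.
  destruct Hcpo as [[_ [Htrans _]] Hchain_sup].
  destruct (countable_enum D Hcount (proj1 Hdir)) as [e [HeD Hesurj]].
  destruct (directed_dominating_chain le D e Hdir HeD) as [c [Hc [HcD Hec]]].
  destruct (Hchain_sup c Hc) as [s Hs].
  exists s.
  apply (is_sup_cofinal le (fun x => exists i, c i = x) D s Htrans); [| | exact Hs].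
  - intros x [n <-]. apply HcD.
  - intros x Hx. destruct (Hesurj x Hx) as [n <-].
    exists (c n). split; [exists n; reflexivity | apply Hec].
Qed.
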